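(* Let $N\geq 3$ be prime, $q\in\mathbb{C}$ with $q^N=1$, $q\neq 1$, and let $X\subset\mathbb{R}^d$ be a convex subspace. Let $\tau\in C^q_m(X)$ and $\sigma\in C^q_n(X)$ be singular $q$-chains with $mn>0$. Then $$\partial(\tau*\sigma)=\partial(\tau)*\sigma+q^{m+1}\,\tau*\partial(\sigma).$$
   Context: Singular $q$-chains: $C^q_n(X)$ is the free $\mathbb{Z}[q]$-module with basis the continuous maps $\sigma:\Delta^n\to X$, where $\Delta^n\subset\mathbb{R}^{n+1}$ is the convex hull of the standard basis $e_0,\dots,e_n$. The $j$-th face of an $n$-simplex is $\partial_j\sigma=\sigma\circ\lambda_j$, where $\lambda_j:\Delta^{n-1}\to\Delta^n$ is the affine map sending $e_0,\dots,e_{n-1}$ in order to $e_0,\dots,\widehat{e_j},\dots,e_n$; the border map is $\partial=\sum_{j=0}^n q^j\partial_j$ on $C^q_n(X)$ for $n\geq1$, extended linearly. Convex product: for singular simplices $\tau:\Delta^m\to X$, $\sigma:\Delta^n\to X$, write points of $\Delta^{m+n+1}$ as $(\alpha;\beta)=(\alpha_0,\dots,\alpha_m;\beta_0,\dots,\beta_n)$, $|\alpha|=\sum\alpha_i$, $|\beta|=\sum\beta_j$; then $\tau*\sigma:\Delta^{m+n+1}\to X$ is $\tau(\alpha)$ if $|\beta|=0$, $\sigma(\beta)$ if $|\alpha|=0$, and $|\alpha|\,\tau(\alpha/|\alpha|)+|\beta|\,\sigma(\beta/|\beta|)$ otherwise. This is extended to a bilinear map $C^q_m(X)\times C^q_n(X)\to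 C^q_{m+n+1}(X)$. *)

From HB Require Import structures.
From mathcomp Require Import all_boot all_order all_algebra all_field.
From mathcomp Require Import all_classical all_reals all_analysis.
Set Implicit Arguments. Unset Strict Implicit. Unset Printing Implicit Defensive.
Import Order.TTheory GRing.Theory Num.Theory.
Import numFieldNormedType.Exports.
Local Open Scope ring_scope.
Local Open Scope classical_set_scope.

Section QChains.
Variables (R : realType) (d : nat).

(* Points of R^{k+1} are represented as functions nat -> R that vanish      *)
(* beyond index k.  The standard simplex Delta^k, in this representation:   *)
Definition stdsimplex (k : nat) (x : nat -> R) : Prop :=
  (forall i, 0 <= x i) /\ (forall i, (k < i)%N -> x i = 0) /\
  \sum_(i < k.+1) x i = 1.

Definition stdsimplex_rV (k : nat) : set 'rV[R]_(k.+1) :=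
  [set v | (forall i, 0 <= v 0 i) /\ \sum_i v 0 i = 1].

Definition ext (k : nat) (v : 'rV[R]_(k.+1)) : nat -> R :=
  fun i => if (i < k.+1)%N then v 0 (inord i) else 0.

(* a (candidate) singular simplex: a map into R^d; only its values on the   *)
(* standard simplex matter *)
Definition smap := (nat -> R) -> 'rV[R]_d.

Definition singular_simplex (X : set 'rV[R]_d) (k : nat) (s : smap) : Prop :=
  {within @stdsimplex_rV k, continuous (s \o @ext k)} /\
  (forall x, stdsimplex k x -> X (s x)).

Definition same_simplex (k : nat) (s t : smap) : Prop :=
  forall x, stdsimplex k x -> s x = t x.

(* lambda_j : Delta^{k-1} -> Delta^k, e_i |-> e_i (i<j), e_i |-> e_{i+1} (i>=j) *)
Definition lambda (j : nat) (x : nat -> R) : nat -> R :=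
  fun i => if (i < j)%N then x i else if i == j then 0 else x i.-1.

Definition face (j : nat) (s : smap) : smap := fun x => s (lambda j x).

(* chains: formal Z[q]-linear combinations, represented as finite lists *)
Definition chain := seq (algC * smap).

Definition in_Zq (q z : algC) : Prop :=
  exists p : {poly int}, z = (map_poly (fun k : int => k%:~R) p).[q].

Definition is_chain (q : algC) (X : set 'rV[R]_d) (k : nat) (c : chain) : Prop :=
  forall e, e \in c -> in_Zq q e.1 /\ singular_simplex X k e.2.

Definition coef (k : nat) (c : chain) (rho : smap) : algC :=
  \sum_(e <- c | `[< same_simplex k e.2 rho >]) e.1.

Definition chain_eq (k : nat) (c1 c2 : chain) : Prop :=
  forall rho, coef k c1 rho = coef k c2 rho.

Definition chain_scale (a : algC) (c : chain) : chain :=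
  [seq (a * e.1, e.2) | e <- c].

Definition border (q : algC) (k : nat) (c : chain) : chain :=
  if k is 0 then [::] else
  flatten [seq [seq (q ^+ j * e.1, face j e.2) | j <- iota 0 k.+1] | e <- c].

Definition conv (m n : nat) (t s : smap) : smap := fun x =>
  let alpha := fun i => if (i <= m)%N then x i else 0 in
  let beta := fun i => if (i <= n)%N then x (m.+1 + i)%N else 0 in
  let a := \sum_(i < m.+1) x i in
  let b := \sum_(i < n.+1) x (m.+1 + i)%N in
  if b == 0 then t alpha
  else if a == 0 then s beta
  else a *: t (fun i => alpha i / a) + b *: s (fun i => beta i / b).

Definition cprod (m n : nat) (c1 c2 : chain) : chain :=
  [seq (e1.1 * e2.1, conv m n e1.2 e2.2) | e1 <- c1, e2 <- c2].

End QChains.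

Definition convex_subset (R : realType) (d : nat) (X : set 'rV[R]_d) : Prop :=
  forall x y, X x -> X y -> forall t : R, 0 <= t -> t <= 1 ->
    X ((1 - t) *: x + t *: y).

From Pilot Require Import Defs.
From HB Require Import structures.
From mathcomp Require Import all_boot all_order all_algebra all_field.
From mathcomp Require Import all_classical all_reals all_analysis.
From mathcomp Require Import zify.
Import Order.TTheory GRing.Theory Num.Theory.
Import numFieldNormedType.Exports.
Set Implicit Arguments. Unset Strict Implicit.
Local Open Scope ring_scope.

(* The vertices of Delta^{m+n+1} are those of Delta^m followed by those of
   Delta^n.  Deleting the j-th vertex with j <= m therefore gives the convex
   product of the j-th face of tau with sigma, and deleting the vertex m+1+i
   gives the convex product of tau with the i-th face of sigma.  The border
   weight q^j of the first kind of face is the weight of the j-th face of tau,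
   that of the second kind is q^(m+1) times the weight q^i of the i-th face of
   sigma. *)

Section FacesOfConvexProduct.
Variables (R : realType) (d : nat).

Lemma lambda_comp (h : R -> R) j (f : nat -> R) i : h 0 = 0 ->
  h (lambda j f i) = lambda j (h \o f) i.
Proof. by move=> h0; rewrite /lambda; case: ltnP => // _; case: eqP. Qed.

Lemma lambda_trunc j k (f : nat -> R) i : (j <= k.+1)%N ->
  (if (i <= k.+1)%N then lambda j f i else 0) =
  lambda j (fun i => if (i <= k)%N then f i else 0) i.
Proof.
move=> hj; rewrite /lambda; case: (ltnP i j) => hij.
  have -> : (i <= k.+1)%N by lia.
  by have -> : (i <= k)%N by lia.
case: eqP => [->|hne]; first by rewrite hj.
by case: i hij hne => [|i] /= hij hne; [lia | rewrite ltnS].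
Qed.

Lemma lambda_addn m j (f : nat -> R) i :
  lambda (m + j) f (m + i) = lambda j (fun i => f (m + i)%N) i.
Proof.
rewrite /lambda ltn_add2l eqn_add2l; case: ltnP => // hij; case: eqP => // hne.
by case: i hij hne => [|i] hij hne; [lia | rewrite addnS].
Qed.

Lemma lambda_ltn j (f : nat -> R) i : (i < j)%N -> lambda j f i = f i.
Proof. by rewrite /lambda => ->. Qed.

Lemma lambda_gtn j (f : nat -> R) i : (j <= i)%N -> lambda j f i.+1 = f i.
Proof.
move=> hji; rewrite /lambda.
have -> : (i.+1 < j)%N = false by lia.
by have -> : (i.+1 == j) = false by lia.
Qed.

Lemma sum_lambda j k (f : nat -> R) : (j <= k)%N ->
  \sum_(i < k.+1) lambda j f i = \sum_(i < k) f i.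
Proof.
elim: k => [|k IH] hj.
  have -> : j = 0%N by lia.
  by rewrite big_ord_recr !big_ord0 /lambda /= add0r.
rewrite big_ord_recr /=; case: (ltnP j k.+1) => hjk.
  rewrite IH; last by lia.
  by rewrite [RHS]big_ord_recr lambda_gtn.
have -> : j = k.+1 by lia.
rewrite /lambda ltnn eqxx addr0; apply: eq_bigr => i _.
by rewrite ltn_ord.
Qed.

Lemma face_conv_l m n (t s : smap R d) j : (j <= m.+1)%N ->
  face j (Defs.conv m.+1 n t s) = Defs.conv m n (face j t) s.
Proof.
move=> hj; apply: funext => x; rewrite /face /Defs.conv /=.
have tail i : lambda j x (m.+2 + i) = x (m.+1 + i)%N.
  by rewrite addSn lambda_gtn //; lia.
have tail_sum : \sum_(i < n.+1) lambda j x (m.+2 + i) =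
    \sum_(i < n.+1) x (m.+1 + i)%N.
  by apply: eq_bigr => i _; rewrite tail.
rewrite sum_lambda // tail_sum.
have trunc_div a : (fun i => (if (i <= m.+1)%N then lambda j x i else 0) / a) =
    lambda j (fun i => (if (i <= m)%N then x i else 0) / a).
  apply: funext => i; rewrite lambda_trunc //.
  exact: (lambda_comp (h := fun y => y / a)) (mul0r _).
rewrite trunc_div (funext (fun i => lambda_trunc x i hj)).
by congr (if _ then _ else if _ then s _ else _ *: _ + _ *: s _);
  apply: funext => i; rewrite tail.
Qed.

Lemma face_conv_r m n (t s : smap R d) i : (i <= n.+1)%N ->
  face (m.+1 + i) (Defs.conv m n.+1 t s) = Defs.conv m n t (face i s).
Proof.
move=> hi; apply: funext => x; rewrite /face /Defs.conv /=.
have head k : (k <= m)%N -> lambda (m.+1 + i) x k = x k.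
  by move=> hk; rewrite lambda_ltn //; lia.
have head_sum : \sum_(k < m.+1) lambda (m.+1 + i) x k = \sum_(k < m.+1) x k.
  by apply: eq_bigr => k _; rewrite head // -ltnS.
have tail_sum : \sum_(k < n.+2) lambda (m.+1 + i) x (m.+1 + k) =
    \sum_(k < n.+1) x (m.+1 + k)%N.
  by under eq_bigr do rewrite lambda_addn; exact: sum_lambda.
rewrite head_sum tail_sum.
have shift_trunc (h : R -> R) : h 0 = 0 ->
    (fun k => h (if (k <= n.+1)%N then lambda (m.+1 + i) x (m.+1 + k) else 0)) =
    lambda i (fun k => h (if (k <= n)%N then x (m.+1 + k)%N else 0)).
  move=> h0; apply: funext => k.
  by rewrite lambda_addn lambda_trunc // (lambda_comp _ _ _ h0).
rewrite (shift_trunc id) // (shift_trunc (fun y => y / _)) ?mul0r //.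
by congr (if _ then t _ else if _ then _ else _ *: t _ + _);
  apply: funext => k; case: leqP => // hk; rewrite head.
Qed.

Lemma sum_faces_conv (V : nmodType) m n (t s : smap R d)
    (F : nat -> smap R d -> V) : (0 < m)%N -> (0 < n)%N ->
  \sum_(j <- iota 0 (m + n).+2) F j (face j (Defs.conv m n t s)) =
  \sum_(j <- iota 0 m.+1) F j (Defs.conv m.-1 n (face j t) s) +
  \sum_(i <- iota 0 n.+1) F (m.+1 + i)%N (Defs.conv m n.-1 t (face i s)).
Proof.
case: m => [//|m] _; case: n => [//|n] _.
rewrite (_ : ((m.+1 + n.+1).+2 = m.+2 + n.+2)%N); last by lia.
rewrite iotaD add0n -[in iota m.+2 _](addn0 m.+2) iotaDl big_cat big_map.
congr (_ + _); rewrite !big_seq; apply: eq_bigr => j; rewrite mem_iota => /andP[_].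
  by rewrite add0n ltnS => hj; rewrite face_conv_l.
by rewrite add0n ltnS => hj; rewrite face_conv_r.
Qed.

End FacesOfConvexProduct.

Section ChainCoefficients.
Variables (R : realType) (d : nat).

Definition coef_term k (rho : smap R d) (e : algC * smap R d) : algC :=
  if `[< same_simplex k e.2 rho >] then e.1 else 0.

Lemma coef_sumE k (c : chain R d) rho :
  coef k c rho = \sum_(e <- c) coef_term k rho e.
Proof. exact: big_mkcond. Qed.

Lemma big_border (V : nmodType) q k (c : chain R d) (F : algC * smap R d -> V) :
  (0 < k)%N ->
  \sum_(e <- border q k c) F e =
  \sum_(e <- c) \sum_(j <- iota 0 k.+1) F (q ^+ j * e.1, face j e.2).
Proof.
case: k => // k _; rewrite big_flatten big_map.
by apply: eq_bigr => e _; rewrite big_map.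
Qed.

Lemma big_cprod (V : nmodType) m n (c1 c2 : chain R d)
    (F : algC * smap R d -> V) :
  \sum_(e <- cprod m n c1 c2) F e =
  \sum_(e1 <- c1) \sum_(e2 <- c2) F (e1.1 * e2.1, Defs.conv m n e1.2 e2.2).
Proof. by rewrite big_allpairs_dep. Qed.

End ChainCoefficients.

(* The identity is formal. *)
Theorem lemma4p2 (R : realType) (d N : nat) (q : algC) (X : set 'rV[R]_d)
    (m n : nat) (tau sigma : chain R d) :
  prime N -> (3 <= N)%N -> q ^+ N = 1 -> q != 1 ->
  convex_subset X ->
  is_chain q X m tau -> is_chain q X n sigma -> (0 < m * n)%N ->
  chain_eq (m + n)
    (border q (m + n + 1) (cprod m n tau sigma))
    (cprod m.-1 n (border q m tau) sigma
       ++ chain_scale (q ^+ m.+1) (cprod m n.-1 tau (border q n sigma))).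
Proof.
move=> _ _ _ _ _ _ _; rewrite muln_gt0 => /andP[m_gt0 n_gt0] rho.
rewrite !coef_sumE big_cat big_border ?addn1 // big_cprod.
rewrite big_cprod big_border //.
rewrite /chain_scale big_map big_cprod.
under [X in _ = _ + X]eq_bigr do rewrite big_border //.
rewrite -big_split; apply: eq_bigr => e1 _.
rewrite [X in _ = X + _]exchange_big -big_split; apply: eq_bigr => e2 _.
rewrite (sum_faces_conv _ _
  (fun j s => coef_term (m + n) rho (q ^+ j * (e1.1 * e2.1), s))) //.
congr (_ + _); apply: eq_bigr => j _.
  by rewrite mulrA.
by rewrite /= exprD -mulrA [e1.1 * (_ * _)]mulrCA.
Qed.
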